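(* Let $\mathcal{L}$ be a linear space of random variables on $\Omega$ containing all constants, and let $P$ be a coherent$_1$ marginal prevision on $\mathcal{L}$. Let $\mathcal{B}=\{B: B\subseteq\Omega,\ B\in\mathcal{L},\ P(B)>0\}$ (events identified with indicators), and assume $XB\in\mathcal{L}$ for every $X\in\mathcal{L}$ and $B\in\mathcal{B}$. Define $L(X\mid B)=P(XB)/P(B)$ for $X\in\mathcal{L}$, $B\in\mathcal{B}$. Then $L(\cdot\mid\cdot)$ is a finitely additive conditional expectation on $\mathcal{L}\times\mathcal{B}$ (with $L=P$ as the underlying finitely additive expectation on $\mathcal{L}$).
   Context: Random variables are real-valued functions on a nonempty set $\Omega$; events are subsets, identified with indicator functions; $XB$ is the pointwise product. Previsions are extended real numbers; $P(X)=P(X\mid\Omega)$. Coherence$_1$: a collection $\{P(X_i\mid B_i):i\in I\}$ (with nonempty $B_i$) is coherent$_1$ if for every finite $\{i_1,\dots,i_n\}\subseteq I$, all real $\alpha_1,\dots,\alpha_n$ with $\alpha_j\ge 0$ whenever $P(X_{i_j}\mid B_{i_j})=+\infty$ and $\alpha_j\le 0$ whenever $P(X_{i_j}\mid B_{i_j})=-\infty$, and all real $c_j$ with $c_j=P(X_{i_j}\mid B_{i_j})$ whenever finite, $\sup_\omega \sum_{j=1}^n \alpha_j B_{i_j}(\omega)[X_{i_j}(\omega)-c_j]\ge 0$. A finitely additive expectation on a linear space $\mathcal{L}$ containing constants is a map $L:\mathcal{L}\to\mathbb{R}\cup\{\pm\infty\}$ that is nonnegative ($X\le Y$ implies $L(X)\le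 L(Y)$), extended-linear ($L(\alpha X+\beta Y)=\alpha L(X)+\beta L(Y)$ for real $\alpha,\beta$ whenever the right side is not $\infty-\infty$, with $0\times(\pm\infty)=0$), and has $L(1)=1$. Finitely additive conditional expectation: let $\mathcal{L}$ be a linear space of random variables, $\mathcal{B}$ a collection of nonempty events including $\Omega$, with $XB\in\mathcal{L}$ for all $X\in\mathcal{L}$, $B\in\mathcal{B}$, and let $L$ be a finitely additive expectation on $\mathcal{L}$. A map $L(\cdot\mid\cdot):\mathcal{L}\times\mathcal{B}\to\mathbb{R}\cup\{\pm\infty\}$ is a finitely additive conditional expectation if for each $B\in\mathcal{B}$, $L(\cdot\mid B)$ is a finitely additive expectation on $\mathcal{L}$ with $L(XB\mid B)=L(X\mid B)$ for all $X\in\mathcal{L}$, and $\{L(X\mid B):X\in\mathcal{L},B\in\mathcal{B}\}$ is a coherent$_1$ conditional prevision. *)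

From HB Require Import structures.
From mathcomp Require Import all_boot all_order all_algebra.
From mathcomp Require Import all_classical all_reals ereal numfun.
Set Implicit Arguments. Unset Strict Implicit. Unset Printing Implicit Defensive.
Import Order.TTheory GRing.Theory Num.Theory.
Local Open Scope classical_set_scope.
Local Open Scope ring_scope.
Local Open Scope ereal_scope.

Section Defs.
Variables (Omega : Type) (R : realType).

Definition rv := Omega -> R.

Definition rvI (X : rv) (B : set Omega) : rv := fun w => (X w * \1_B w)%R.

Definition linear_space_const (Lsp : set rv) : Prop :=
  [/\ (forall c : R, Lsp (fun _ => c)),
      (forall X Y, Lsp X -> Lsp Y -> Lsp (fun w => (X w + Y w)%R)) &
      (forall (a : R) X, Lsp X -> Lsp (fun w => (a * X w)%R))].

Definition undef_sum (x y : \bar R) : Prop :=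
  (x = +oo /\ y = -oo) \/ (x = -oo /\ y = +oo).

(* Coherence_1 of a collection {p i = P(X i | B i) : i in D}. Finite subfamilies
   {i_1,...,i_n} of distinct indices are given by an injective idx : 'I_n -> I. *)
Definition coherent1 (I : Type) (D : set I) (X : I -> rv) (B : I -> set Omega)
    (p : I -> \bar R) : Prop :=
  forall (n : nat) (idx : 'I_n -> I), injective idx -> (forall j, D (idx j)) ->
  forall (alpha c : 'I_n -> R),
    (forall j, p (idx j) = +oo -> (0 <= alpha j)%R) ->
    (forall j, p (idx j) = -oo -> (alpha j <= 0)%R) ->
    (forall j, p (idx j) \is a fin_num -> p (idx j) = (c j)%:E) ->
    0 <= ereal_sup [set (\sum_(j < n)
                          alpha j * \1_(B (idx j)) w * (X (idx j) w - c j))%R%:E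
                   | w in [set: Omega]].

Definition coherent1_marginal (Lsp : set rv) (P : rv -> \bar R) : Prop :=
  @coherent1 rv Lsp id (fun _ => [set: Omega]) P.

Definition fa_expectation (Lsp : set rv) (L : rv -> \bar R) : Prop :=
  [/\ (forall X Y, Lsp X -> Lsp Y -> (forall w, (X w <= Y w)%R) -> L X <= L Y),
      (forall (a b : R) X Y, Lsp X -> Lsp Y ->
         ~ undef_sum (a%:E * L X) (b%:E * L Y) ->
         L (fun w => (a * X w + b * Y w)%R) = a%:E * L X + b%:E * L Y) &
      L (fun _ => 1%R) = 1].

Definition fa_cond_expectation (Lsp : set rv) (Bc : set (set Omega))
    (L : rv -> \bar R) (Lc : rv -> set Omega -> \bar R) : Prop :=
  [/\ linear_space_const Lsp /\ Bc [set: Omega] /\ (forall B, Bc B -> B !=set0),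
      (forall X B, Lsp X -> Bc B -> Lsp (rvI X B)),
      fa_expectation Lsp L /\ (forall X, Lsp X -> Lc X [set: Omega] = L X),
      (forall B, Bc B ->
         fa_expectation Lsp (fun X => Lc X B) /\
         (forall X, Lsp X -> Lc (rvI X B) B = Lc X B)) &
      @coherent1 (rv * set Omega) [set XB | Lsp XB.1 /\ Bc XB.2]
                 fst snd (fun XB => Lc XB.1 XB.2)].

Definition pos_events (Lsp : set rv) (P : rv -> \bar R) : set (set Omega) :=
  [set B | Lsp (\1_B) /\ 0 < P (\1_B)].

(* L(X | B) = P(X B) / P(B) (P(B) is a positive real by coherence) *)
Definition cond_ratio (P : rv -> \bar R) (X : rv) (B : set Omega) : \bar R :=
  P (rvI X B) * ((fine (P (\1_B)))^-1)%:E.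

End Defs.

From HB Require Import structures.
From mathcomp Require Import all_boot all_order all_algebra.
From mathcomp Require Import all_classical all_reals ereal numfun.
From mathcomp Require Import ring lra.
Set Implicit Arguments. Unset Strict Implicit. Unset Printing Implicit Defensive.
Import Order.TTheory GRing.Theory Num.Theory.
Local Open Scope classical_set_scope.
Local Open Scope ring_scope.
Local Open Scope ereal_scope.

(* Coherence of P on a linear space can be restated as: if sum_j a_j X_j <= s
   pointwise, then sum_j k_j <= s for all reals k_j <= a_j P(X_j).  In this form
   infinite previsions need no separate treatment, and comparing finite lower
   bounds of extended reals, three-term instances yield monotonicity, P(c) = c and
   linearity of P wherever a P(X) + b P(Y) is defined.  Dividing by P(B) > 0
   preserves these properties.  For the joint coherence of the ratios, each
   called-off gamble B_j (X_j - c_j) has prevision P(X_j B_j) - c_j P(B_j), which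
   alpha_j turns into a nonnegative number, so the bound applies with all k_j = 0. *)

Section ExtendedRealFacts.
Variable R : realDomainType.
Implicit Types (x y : \bar R) (a b k : R).

Lemma lee_fin_lower_bounds x y :
  (forall d e : R, d%:E <= x -> e%:E <= - y -> (d + e <= 0)%R) -> x <= y.
Proof.
case: x y => [x| |] [y| |] //= H; rewrite ?leey ?leNye //.
- by have := H x (- y)%R (lexx _) (lexx _); rewrite lee_fin; lra.
- by exfalso; have := H x (1 - x)%R (lexx _) (leey _); lra.
- by exfalso; have := H (y + 1)%R (- y)%R (leey _) (lexx _); lra.
- by exfalso; have := H 1%R 0%R (leey _) (leey _); lra.
Qed.

(* No definedness hypotheses are needed below: in [\bar R], [+oo + -oo = -oo]. *)
Lemma lee_fin_splitD x y k : k%:E <= x + y ->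
  exists k1 k2 : R, [/\ k1%:E <= x, k2%:E <= y & k = (k1 + k2)%R].
Proof.
case: x y => [x| |] [y| |] //=; rewrite ?lee_fin => kxy.
- by exists x, (k - x)%R; split; rewrite ?lee_fin //; lra.
- by exists x, (k - x)%R; split; rewrite ?lee_fin ?leey //; lra.
- by exists (k - y)%R, y; split; rewrite ?lee_fin ?leey //; lra.
- by exists k, 0%R; rewrite !leey addr0.
Qed.

Lemma lee_mulEFinDl a b x : a%:E * x + b%:E * x <= (a + b)%:E * x.
Proof.
case: x => [x| |]; first by rewrite -!EFinM -EFinD mulrDl.
all: case: (ltgtP a 0%R) => [a0|a0|->]; last by rewrite !mul0e add0e add0r.
all: case: (ltgtP b 0%R) => [b0|b0|->]; last by rewrite !mul0e adde0 addr0.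
all: try by rewrite EFinD ge0_muleDl // lee_fin; exact: ltW.
all: try by rewrite EFinD le0_muleDl // lee_fin; exact: ltW.
- by rewrite (lt0_muley (x := a%:E)) ?(gt0_muley (x := b%:E)) ?lte_fin // addNye leNye.
- by rewrite (gt0_muley (x := a%:E)) ?(lt0_muley (x := b%:E)) ?lte_fin // addeNy leNye.
- by rewrite (lt0_muleNy (x := a%:E)) ?(gt0_muleNy (x := b%:E)) ?lte_fin // addeNy leNye.
- by rewrite (gt0_muleNy (x := a%:E)) ?(lt0_muleNy (x := b%:E)) ?lte_fin // addNye leNye.
Qed.
End ExtendedRealFacts.

Section UndefinedSums.
Variable R : realType.
Implicit Types (x y : \bar R).

Lemma adde_def_undef_sum x y : ~ undef_sum x y -> x +? y.
Proof.
move=> xy; rewrite /adde_def; apply/andP; split; apply/negP => /andP[/eqP ex /eqP ey].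
- by apply: xy; left.
- by apply: xy; right.
Qed.

Lemma undef_sum_mulr x y (k : R) : (0 < k)%R ->
  undef_sum x y -> undef_sum (x * k%:E) (y * k%:E).
Proof.
move=> k0 [[-> ->]|[-> ->]]; rewrite ?gt0_mulye ?gt0_mulNye ?lte_fin //.
- by left.
- by right.
Qed.

End UndefinedSums.

Lemma ereal_sup_ge0 (R : realType) (T : Type) (t0 : T) (f : T -> R) :
  (forall s : R, (forall t, f t <= s)%R -> (0 <= s)%R) ->
  0 <= ereal_sup [set (f t)%:E | t in [set: T]].
Proof.
move=> fs; have ub t : (f t)%:E <= ereal_sup [set (f t)%:E | t in [set: T]].
  by apply: ereal_sup_ubound; exists t.
case: ereal_sup ub => [s||] ub //; last by have := ub t0.
by rewrite lee_fin; apply: fs => t; rewrite -lee_fin.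
Qed.

Lemma sum_lift_merge (V : nmodType) n (F : 'I_n.+1 -> V) (j i : 'I_n.+1) : j != i ->
  (\sum_(m < n) (F (lift i m) + (if lift i m == j then F i else 0))
   = \sum_(m < n.+1) F m)%R.
Proof.
move=> ji; rewrite big_split /= [RHS](bigD1_ord i) //= addrC; congr (_ + _)%R.
transitivity (\sum_(m < n.+1) (if m == j then F i else 0))%R.
  by rewrite (bigD1_ord i) //= eq_sym (negbTE ji) add0r.
by rewrite -big_mkcond big_pred1_eq.
Qed.

Section CoherentMarginal.
Variables (Omega : Type) (R : realType).
Variables (Lsp : set (rv Omega R)) (P : rv Omega R -> \bar R).
Hypothesis HP : coherent1_marginal Lsp P.

(* Prices are absorbed into [k j <= a j * P (X j)], which also encodes the sign
   constraints at infinite previsions. *)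
Lemma coherent1_marginal_bound_inj n (X : 'I_n -> rv Omega R) (a k : 'I_n -> R) (s : R) :
  injective X -> (forall j, Lsp (X j)) ->
  (forall j, (k j)%:E <= (a j)%:E * P (X j)) ->
  (forall w, \sum_(j < n) a j * X j w <= s)%R -> (\sum_(j < n) k j <= s)%R.
Proof.
move=> injX LX kP Xs.
(* At an infinite prevision any price is allowed; [k j / a j] gives [a j * c j = k j],
   and for [a j = 0] the hypothesis already forces [k j <= 0]. *)
pose c j := if P (X j) \is a fin_num then fine (P (X j)) else (k j / a j)%R.
have kc j : (k j <= a j * c j)%R.
  have [a0|a0] := eqVneq (a j) 0%R.
    by move: (kP j); rewrite a0 mul0e mul0r lee_fin.
  rewrite /c; case: ifP => [finX|_]; last by rewrite mulrC divfK.
  by rewrite -lee_fin EFinM fineK.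
have pos j : P (X j) = +oo -> (0 <= a j)%R.
  move=> Xj; rewrite leNgt; apply/negP => a0.
  by move: (kP j); rewrite Xj lt0_muley ?lte_fin.
have neg j : P (X j) = -oo -> (a j <= 0)%R.
  move=> Xj; rewrite leNgt; apply/negP => a0.
  by move: (kP j); rewrite Xj gt0_muleNy ?lte_fin.
have fin j : P (X j) \is a fin_num -> P (X j) = (c j)%:E.
  by move=> Xj; rewrite /c Xj fineK.
have sup0 := HP injX LX pos neg fin.
rewrite -subr_ge0 -lee_fin; apply: (le_trans sup0); apply: ge_ereal_sup => _ [w _ <-].
rewrite lee_fin /= indicT /cst.
apply: (@le_trans _ _ (\sum_(j < n) a j * X j w - \sum_(j < n) k j)%R).
  by rewrite -sumrB; apply: ler_sum => j _; rewrite mulr1 mulrBr lerD2l lerN2.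
by rewrite lerD2r.
Qed.

Lemma coherent1_marginal_bound n (X : 'I_n -> rv Omega R) (a k : 'I_n -> R) (s : R) :
  (forall j, Lsp (X j)) -> (forall j, (k j)%:E <= (a j)%:E * P (X j)) ->
  (forall w, \sum_(j < n) a j * X j w <= s)%R -> (\sum_(j < n) k j <= s)%R.
Proof.
elim: n X a k => [|n IHn] X a k LX kP Xs.
  by apply: coherent1_marginal_bound_inj => // -[].
have [injX|] := pselect (injective X).
  exact: (@coherent1_marginal_bound_inj n.+1 X a k s injX LX kP Xs).
(* Coherence only speaks of distinct variables: merge the term [i] into [j]. *)
move=> /existsNP[j /existsNP[i /not_implyP[Xji /eqP ji]]].
pose merge (f : 'I_n.+1 -> R) (m : 'I_n) :=
  (f (lift i m) + (if lift i m == j then f i else 0))%R.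
rewrite -(@sum_lift_merge _ _ k _ _ ji); apply: (IHn (X \o lift i) (merge a)).
- by move=> m; apply: LX.
- move=> m; rewrite /merge /=; case: eqP => [->|_]; last by rewrite !addr0.
  rewrite EFinD; apply: le_trans (lee_mulEFinDl _ _ _); apply: leeD => //.
  by rewrite Xji.
- move=> w; apply: le_trans (Xs w); rewrite le_eqVlt; apply/orP; left; apply/eqP.
  apply: etrans (@sum_lift_merge _ _ (fun j => a j * X j w)%R _ _ ji).
  apply: eq_bigr => m _; rewrite /merge /=; case: eqP => [->|_]; last by rewrite !addr0.
  by rewrite mulrDl Xji.
Qed.

Lemma coherent1_marginal_bound3 (X1 X2 X3 : rv Omega R) (a1 a2 a3 k1 k2 k3 s : R) :
  Lsp X1 -> Lsp X2 -> Lsp X3 ->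
  k1%:E <= a1%:E * P X1 -> k2%:E <= a2%:E * P X2 -> k3%:E <= a3%:E * P X3 ->
  (forall w, a1 * X1 w + a2 * X2 w + a3 * X3 w <= s)%R -> (k1 + k2 + k3 <= s)%R.
Proof.
move=> L1 L2 L3 k1P k2P k3P Xs.
have := @coherent1_marginal_bound 3 (fun j => nth X1 [:: X1; X2; X3] j)
  (fun j => nth 0 [:: a1; a2; a3] j)%R (fun j => nth 0 [:: k1; k2; k3] j)%R s.
rewrite !big_ord_recr big_ord0 /= add0r; apply; try by case=> -[|[|[|]]].
by move=> w; rewrite !big_ord_recr big_ord0 /= add0r.
Qed.

Lemma coherent1_marginal_le X Y : Lsp X -> Lsp Y -> (forall w, X w <= Y w)%R -> P X <= P Y.
Proof.
move=> LX LY XY; apply: lee_fin_lower_bounds => d e dX eY.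
have := @coherent1_marginal_bound3 X Y X 1%R (-1)%R 0%R d e 0%R 0%R LX LY LX.
rewrite mul1e EFinN mulN1e mul0e addr0; apply=> // w.
by have := XY w; lra.
Qed.

Hypothesis HL : linear_space_const Lsp.

Lemma coherent1_marginal_cst c : P (fun _ => c) = c%:E.
Proof.
have [Lc _ _] := HL.
have bound a d := @coherent1_marginal_bound3 _ _ _ a 0%R 0%R d 0%R 0%R (a * c)%R
  (Lc c) (Lc c) (Lc c).
apply/eqP; rewrite eq_le; apply/andP; split; apply: lee_fin_lower_bounds => d e dc ec.
- have := bound 1%R d; rewrite mul1e mul0e !mul0r !addr0 mul1r => /(_ dc (lexx _) (lexx _)).
  by move: ec; rewrite -EFinN lee_fin => ec /(_ (fun _ => lexx _)); lra.
- have := bound (-1)%R e; rewrite EFinN mulN1e mul0e !mul0r !addr0.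
  move=> /(_ ec (lexx _) (lexx _)).
  by move: dc; rewrite lee_fin => dc /(_ (fun _ => lexx _)); lra.
Qed.

Lemma coherent1_marginal_linear a b X Y : Lsp X -> Lsp Y ->
  ~ undef_sum (a%:E * P X) (b%:E * P Y) ->
  P (fun w => a * X w + b * Y w)%R = a%:E * P X + b%:E * P Y.
Proof.
move=> LX LY abXY; have [_ LD LM] := HL.
pose Z := (fun w => a * X w + b * Y w)%R.
have LZ : Lsp Z by apply: LD; apply: LM.
apply/eqP; rewrite eq_le; apply/andP; split; apply: lee_fin_lower_bounds => d e dZ eXY.
- move: eXY; rewrite oppeD ?adde_def_undef_sum // -!mulNe -!EFinN.
  move=> /lee_fin_splitD[e1 [e2 [e1X e2Y ->]]].
  have := @coherent1_marginal_bound3 Z X Y 1%R (- a)%R (- b)%R d e1 e2 0%R LZ LX LY.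
  by rewrite mul1e addrA; apply=> // w; rewrite /Z; lra.
- move: dZ => /lee_fin_splitD[d1 [d2 [d1X d2Y ->]]].
  have := @coherent1_marginal_bound3 X Y Z a b (-1)%R d1 d2 e 0%R LX LY LZ.
  by rewrite EFinN mulN1e; apply=> // w; rewrite /Z; lra.
Qed.

Lemma coherent1_marginal_fa_expectation : fa_expectation Lsp P.
Proof.
split; [exact: coherent1_marginal_le | exact: coherent1_marginal_linear |].
exact: coherent1_marginal_cst.
Qed.
End CoherentMarginal.

Lemma cond_ratio_fa_expectation (Omega : Type) (R : realType) (Lsp : set (rv Omega R))
    (L : rv Omega R -> \bar R) (B : set Omega) (pB : R) :
  fa_expectation Lsp L -> (forall X, Lsp X -> Lsp (rvI X B)) ->
  L \1_B = pB%:E -> (0 < pB)%R -> fa_expectation Lsp (cond_ratio L ^~ B).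
Proof.
move=> [Lle Llin L1] LB LBp pB0; have ipB0 : (0 < pB^-1)%R by rewrite invr_gt0.
rewrite /cond_ratio LBp /=; split.
- move=> X Y LX LY XY; apply: lee_wpmul2r; first by rewrite lee_fin ltW.
  apply: Lle; [exact: LB | exact: LB | move=> w].
  by rewrite /rvI ler_wpM2r // indicE ler0n.
- move=> a b X Y LX LY abXY.
  have abXY' : ~ undef_sum (a%:E * L (rvI X B)) (b%:E * L (rvI Y B)).
    by move=> /(undef_sum_mulr ipB0); rewrite -!muleA.
  have -> : rvI (fun w => a * X w + b * Y w)%R B
            = (fun w => a * rvI X B w + b * rvI Y B w)%R.
    by apply: funext => w; rewrite /rvI mulrDl !mulrA.
  rewrite Llin //; try exact: LB.
  by rewrite muleDl ?adde_def_undef_sum // !muleA.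
- have -> : rvI (fun _ => 1%R) B = \1_B :> rv Omega R.
    by apply: funext => w; rewrite /rvI mul1r.
  by rewrite LBp -EFinM mulfV ?gt_eqF.
Qed.

Section ConditionalCoherence.
Variables (Omega : Type) (R : realType).
Variables (Lsp : set (rv Omega R)) (P : rv Omega R -> \bar R).
Hypotheses (HL : linear_space_const Lsp) (HP : coherent1_marginal Lsp P).
Hypothesis LspI : forall X B, Lsp X -> pos_events Lsp P B -> Lsp (rvI X B).

Lemma pos_event_prevision B :
  pos_events Lsp P B -> exists2 pB : R, P \1_B = pB%:E & (0 < pB)%R.
Proof.
move=> [LB PB0]; have [L1 _ _] := HL.
have PB1 : P \1_B <= 1.
  rewrite -(coherent1_marginal_cst HP HL 1).
  apply: (coherent1_marginal_le HP LB (L1 1%R)) => w.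
  by rewrite indicE lern1 leq_b1.
by case: (P \1_B) PB0 PB1 => [p||] // p0 _; exists p; rewrite // -lte_fin.
Qed.

Definition cond_gamble (X : rv Omega R) (B : set Omega) (c : R) : rv Omega R :=
  fun w => (\1_B w * (X w - c))%R.

Lemma cond_gambleE X B c :
  cond_gamble X B c = (fun w => 1 * rvI X B w + (- c) * \1_B w)%R.
Proof. by apply: funext => w; rewrite /cond_gamble /rvI; ring. Qed.

Lemma cond_gamble_in X B c : Lsp X -> pos_events Lsp P B -> Lsp (cond_gamble X B c).
Proof.
move=> LX HB; have [_ LD LM] := HL; have [LB _] := HB.
by rewrite cond_gambleE; apply: LD; apply: LM => //; apply: LspI.
Qed.

Lemma cond_gamble_prevision X B c pB : Lsp X -> pos_events Lsp P B -> P \1_B = pB%:E ->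
  P (cond_gamble X B c) = P (rvI X B) + (- c * pB)%:E.
Proof.
move=> LX HB PB; have [LB _] := HB.
rewrite cond_gambleE (coherent1_marginal_linear HP HL) ?PB ?mul1e ?EFinM //.
  exact: LspI.
by rewrite -EFinM => -[[_ //]|[_ //]].
Qed.

Lemma cond_gamble_ge0 X B (alpha c : R) : Lsp X -> pos_events Lsp P B ->
  (cond_ratio P X B = +oo -> 0 <= alpha)%R -> (cond_ratio P X B = -oo -> alpha <= 0)%R ->
  (cond_ratio P X B \is a fin_num -> cond_ratio P X B = c%:E) ->
  0 <= alpha%:E * P (cond_gamble X B c).
Proof.
move=> LX HB; have [pB PB pB0] := pos_event_prevision HB.
have ipB0 : (0 < pB^-1)%R by rewrite invr_gt0.
rewrite (cond_gamble_prevision _ LX HB PB) /cond_ratio PB /=.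
case: (P (rvI X B)) => [u||] apos aneg afin.
- move: afin; rewrite -EFinM => /(_ isT) [<-].
  by rewrite mulNr divfK ?gt_eqF // -EFinD subrr mule0.
- by rewrite mule_ge0 ?leey // lee_fin apos // gt0_mulye ?lte_fin.
- by rewrite mule_le0 ?leNye // lee_fin aneg // gt0_mulNye ?lte_fin.
Qed.

Lemma cond_ratio_coherent1 (w0 : Omega) :
  coherent1 [set XB | Lsp XB.1 /\ pos_events Lsp P XB.2] fst snd
            (fun XB => cond_ratio P XB.1 XB.2).
Proof.
move=> n idx _ Didx alpha c apos aneg afin.
apply: (ereal_sup_ge0 w0) => s bets.
have := @coherent1_marginal_bound _ _ _ _ HP n
  (fun j => cond_gamble (idx j).1 (idx j).2 (c j)) alpha (fun=> 0%R) s.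
rewrite big1 //; apply.
- by move=> j; have [LX HB] := Didx j; apply: cond_gamble_in.
- move=> j; have [LX HB] := Didx j.
  exact: (cond_gamble_ge0 LX HB (apos j) (aneg j) (afin j)).
- by move=> w; under eq_bigr do rewrite mulrA; apply: bets.
Qed.

End ConditionalCoherence.

Theorem proposition6p1 (Omega : Type) (R : realType) (w0 : Omega)
    (Lsp : set (rv Omega R)) (P : rv Omega R -> \bar R) :
  linear_space_const Lsp ->
  coherent1_marginal Lsp P ->
  (forall X B, Lsp X -> pos_events Lsp P B -> Lsp (rvI X B)) ->
  fa_cond_expectation Lsp (pos_events Lsp P) P (cond_ratio P).
Proof.
move=> HL HP LspI; have [Lc _ _] := HL.
have P1 := coherent1_marginal_cst HP HL 1%R.
have indT : \1_[set: Omega] = (fun=> 1%R) :> rv Omega R by rewrite indicT.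
have rvIT X : rvI X [set: Omega] = X by apply: funext => w; rewrite /rvI indicT /cst mulr1.
split.
- split=> //; split; first by split; rewrite indT ?P1 ?lte01.
  move=> B /(pos_event_prevision HL HP)[pB PB pB0]; apply/set0P/eqP => B0.
  move: PB; rewrite B0 indic0 (coherent1_marginal_cst HP HL) => -[p0].
  by rewrite -p0 ltxx in pB0.
- exact: LspI.
- split=> [|X LX]; first exact: coherent1_marginal_fa_expectation.
  by rewrite /cond_ratio indT P1 rvIT /= invr1 mule1.
- move=> B HB; have [pB PB pB0] := pos_event_prevision HL HP HB; split.
    apply: cond_ratio_fa_expectation PB pB0; first exact: coherent1_marginal_fa_expectation.
    by move=> X LX; apply: LspI.
  move=> X LX; congr (P _ * _); apply: funext => w.
  by rewrite /rvI indicE -mulrA; case: (w \in B); rewrite ?mulr1 ?mulr0.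
- exact: cond_ratio_coherent1.
Qed.
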